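(* Fix $n\ge 1$ and let $x\in\mathcal{NM}_n$. Then $\chi^+(x)$ equals the number of minimal idempotent join-irreducible elements $g\in\mathcal{NM}_n$ such that $g\le x$.
   Context: An NM algebra is an algebra $\langle A,\wedge,\vee,\odot,\to,\bot,\top\rangle$ such that $(A,\wedge,\vee,\bot,\top)$ is a bounded lattice, $\langle A,\odot,\top\rangle$ is a commutative monoid, and for all $x,y,z$: $x\odot y\le z$ iff $x\le y\to z$; $(x\to y)\vee(y\to x)=\top$; $\neg(x\odot y)\vee((x\wedge y)\to(x\odot y))=\top$ where $\neg x:=x\to\bot$; and $\neg\neg x=x$. $\mathcal{NM}_n$ denotes the free NM algebra on $n$ generators, i.e. the Lindenbaum algebra of formulas of Nilpotent Minimum logic in the variables $x_1,\dots,x_n$ modulo logical equivalence; equivalently, the subalgebra of $[0,1]^{[0,1]^n}$ generated by the coordinate projections, where $[0,1]$ carries the standard NM operations ($\wedge=\min$, $\vee=\max$, $x\odot y=\min(x,y)$ if $x+y>1$ and $0$ otherwise, $x\to y=1$ if $x\le y$ and $\max(1-x,y)$ otherwise). It is a finite distributive lattice. A valuation on a distributive lattice $L$ is a map $\nu:L\to\mathbb{R}$ with $\nu(x)+\nu(y)=\nu(x\vee y)+\nu(x\wedge y)$ for all $x,y$; on a finite distributive lattice a valuation is uniquely determined by its values on join-irreducible elements and on $\bot$. An element is join-irreducible if it is not $\bot$ and $x=y\vee z$ implies $x=y$ or $x=z$. An element $g$ is idempotent if $g\odot g=g$; a minimal idempotent join-irreducible element is one that is minimal (in the lattice order) among the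 idempotent join-irreducible elements. The idempotent Euler characteristic $\chi^+:\mathcal{NM}_n\to\mathbb{R}$ is the unique valuation with $\chi^+(\bot)=0$ and, for each join-irreducible $g$, $\chi^+(g)=1$ if $g\odot g=g$ and $\chi^+(g)=0$ otherwise. *)

From Stdlib Require Import Reals List.
Open Scope R_scope.

Definition nm_and (x y : R) : R := Rmin x y.
Definition nm_or (x y : R) : R := Rmax x y.
Definition nm_prod (x y : R) : R :=
  if Rlt_dec 1 (x + y) then Rmin x y else 0.
Definition nm_imp (x y : R) : R :=
  if Rle_dec x y then 1 else Rmax (1 - x) y.

Inductive form : Type :=
  | FVar : nat -> form
  | FBot : form
  | FTop : form
  | FAnd : form -> form -> form
  | FOr : form -> form -> form
  | FProd : form -> form -> form
  | FImp : form -> form -> form.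

Fixpoint vars_lt (n : nat) (f : form) : Prop :=
  match f with
  | FVar i => (i < n)%nat
  | FBot | FTop => True
  | FAnd a b | FOr a b | FProd a b | FImp a b => vars_lt n a /\ vars_lt n b
  end.

Fixpoint eval (v : nat -> R) (f : form) : R :=
  match f with
  | FVar i => v i
  | FBot => 0
  | FTop => 1
  | FAnd a b => nm_and (eval v a) (eval v b)
  | FOr a b => nm_or (eval v a) (eval v b)
  | FProd a b => nm_prod (eval v a) (eval v b)
  | FImp a b => nm_imp (eval v a) (eval v b)
  end.

(** Points of the cube [0,1]^n, encoded as nat-indexed sequences that are
    in [0,1] on coordinates < n and 0 elsewhere (a bijective encoding). *)
Definition pt (n : nat) : Type :=
  { v : nat -> R | forall i, ((i < n)%nat -> 0 <= v i <= 1) /\ ((n <= i)%nat -> v i = 0) }.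

(** Membership in the subalgebra of [0,1]^([0,1]^n) generated by the projections. *)
Definition in_NM (n : nat) (f : pt n -> R) : Prop :=
  exists phi : form, vars_lt n phi /\ f = (fun p => eval (proj1_sig p) phi).

Record NM (n : nat) : Type := mkNM { nmf : pt n -> R; nm_in : in_NM n nmf }.
Arguments mkNM {n} nmf nm_in.
Arguments nmf {n} _ _.



Lemma in_NM_bot (n : nat) : in_NM n (fun _ => 0).
Proof. exists FBot; split; [exact I | reflexivity]. Qed.
Lemma in_NM_top (n : nat) : in_NM n (fun _ => 1).
Proof. exists FTop; split; [exact I | reflexivity]. Qed.
Lemma in_NM_and (n : nat) (f g : pt n -> R) :
  in_NM n f -> in_NM n g -> in_NM n (fun p => nm_and (f p) (g p)).
Proof. intros [a [Ha ->]] [b [Hb ->]]; exists (FAnd a b); split; [split; assumption | reflexivity]. Qed.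
Lemma in_NM_or (n : nat) (f g : pt n -> R) :
  in_NM n f -> in_NM n g -> in_NM n (fun p => nm_or (f p) (g p)).
Proof. intros [a [Ha ->]] [b [Hb ->]]; exists (FOr a b); split; [split; assumption | reflexivity]. Qed.
Lemma in_NM_prod (n : nat) (f g : pt n -> R) :
  in_NM n f -> in_NM n g -> in_NM n (fun p => nm_prod (f p) (g p)).
Proof. intros [a [Ha ->]] [b [Hb ->]]; exists (FProd a b); split; [split; assumption | reflexivity]. Qed.

Definition NM_bot (n : nat) : NM n := mkNM (fun _ => 0) (in_NM_bot n).
Definition NM_top (n : nat) : NM n := mkNM (fun _ => 1) (in_NM_top n).
Definition NM_meet {n : nat} (x y : NM n) : NM n :=
  mkNM (fun p => nm_and (nmf x p) (nmf y p)) (in_NM_and n _ _ (nm_in n x) (nm_in n y)).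
Definition NM_join {n : nat} (x y : NM n) : NM n :=
  mkNM (fun p => nm_or (nmf x p) (nmf y p)) (in_NM_or n _ _ (nm_in n x) (nm_in n y)).
Definition NM_prod {n : nat} (x y : NM n) : NM n :=
  mkNM (fun p => nm_prod (nmf x p) (nmf y p)) (in_NM_prod n _ _ (nm_in n x) (nm_in n y)).

Definition NM_le {n : nat} (x y : NM n) : Prop := NM_meet x y = x.

Definition join_irreducible {n : nat} (x : NM n) : Prop :=
  x <> NM_bot n /\ forall y z : NM n, x = NM_join y z -> x = y \/ x = z.

Definition idempotent {n : nat} (g : NM n) : Prop := NM_prod g g = g.

Definition idem_ji {n : nat} (g : NM n) : Prop := idempotent g /\ join_irreducible g.

Definition min_idem_ji {n : nat} (g : NM n) : Prop :=
  idem_ji g /\ forall h : NM n, idem_ji h -> NM_le h g -> h = g.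

Definition valuation {n : nat} (nu : NM n -> R) : Prop :=
  forall x y : NM n, nu x + nu y = nu (NM_join x y) + nu (NM_meet x y).

(** [chi] is the idempotent Euler characteristic chi^+ of NM_n
    (the unique valuation with these values). *)
Definition is_chi_plus {n : nat} (chi : NM n -> R) : Prop :=
  valuation chi /\ chi (NM_bot n) = 0 /\
  forall g : NM n, join_irreducible g ->
    (idempotent g -> chi g = 1) /\ (~ idempotent g -> chi g = 0).

From Stdlib Require Import Reals List Lra Lia Bool Wf_nat.
From Stdlib Require Import Classical ClassicalEpsilon FunctionalExtensionality ProofIrrelevance.
Open Scope R_scope.
Import ListNotations.

(* Both chi^+ and the number of minimal idempotent join-irreducibles below [x] are
   valuations: the latter because a join-irreducible of the distributive lattice [NM n]
   lies below [y ∨ z] iff it lies below [y] or [z], so counting is inclusion-exclusion.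
   Valuations on a finite distributive lattice agreeing at the bottom and on the
   join-irreducibles coincide, so it suffices to count below a join-irreducible [g].
   If [g] is idempotent, the idempotents below [g] form a chain (prelinearity), so exactly
   one minimal idempotent join-irreducible lies below it; otherwise
   [g = (g ⊙ g) ∨ (g ∧ ¬g)] forces [g ≤ ¬g], and no nonzero idempotent lies below it.
   Finiteness of [NM n]: at each point the value of a term is one of [0, 1, v i, 1 - v i],
   and which one depends only on the relative order of these finitely many literals. *)

Ltac cases_R := repeat match goal with
  | |- context[Rle_dec ?a ?b] => destruct (Rle_dec a b)
  | |- context[Rlt_dec ?a ?b] => destruct (Rlt_dec a b)
  | H: context[Rle_dec ?a ?b] |- _ => destruct (Rle_dec a b)
  | H: context[Rlt_dec ?a ?b] |- _ => destruct (Rlt_dec a b)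
  end; try lra.

Definition classicb (P : Prop) : bool :=
  if excluded_middle_informative P then true else false.

Lemma classicbP (P : Prop) : classicb P = true <-> P.
Proof. unfold classicb; destruct excluded_middle_informative; split; auto; discriminate. Qed.

Lemma classicbF (P : Prop) : classicb P = false <-> ~ P.
Proof. unfold classicb; destruct excluded_middle_informative; split; auto; easy. Qed.

Lemma length_filter_le {A : Type} (f g : A -> bool) (l : list A) :
  (forall a, f a = true -> g a = true) ->
  (length (filter f l) <= length (filter g l))%nat.
Proof.
  intros Hfg; induction l as [|a l IH]; simpl; [lia|].
  destruct (f a) eqn:Ea; [rewrite (Hfg a Ea); simpl; lia|destruct (g a); simpl; lia].
Qed.

Lemma length_filter_lt {A : Type} (f g : A -> bool) (l : list A) (b : A) :
  (forall a, f a = true -> g a = true) -> In b l -> f b = false -> g b = true ->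
  (length (filter f l) < length (filter g l))%nat.
Proof.
  intros Hfg; induction l as [|a l IH]; simpl; [tauto|].
  intros [->|Hb] Hf Hg.
  - rewrite Hf, Hg; simpl. pose proof (length_filter_le f g l Hfg); lia.
  - specialize (IH Hb Hf Hg).
    destruct (f a) eqn:Ea; [rewrite (Hfg a Ea); simpl; lia|destruct (g a); simpl; lia].
Qed.

Lemma length_filter_orb_andb {A : Type} (f g : A -> bool) (l : list A) :
  (length (filter (fun a => f a || g a) l) + length (filter (fun a => f a && g a) l) =
   length (filter f l) + length (filter g l))%nat.
Proof. induction l as [|a l IH]; simpl; [reflexivity|]. destruct (f a), (g a); simpl; lia. Qed.

Lemma NoDup_length_singleton {A : Type} (l : list A) (h : A) :
  NoDup l -> (forall g, In g l <-> g = h) -> length l = 1%nat.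
Proof.
  intros Hl Hin. destruct l as [|a [|b l]]; [|reflexivity|].
  - exfalso; apply (proj2 (Hin h)); reflexivity.
  - exfalso. inversion Hl as [|? ? Ha _]; subst. apply Ha; left.
    rewrite (proj1 (Hin a)), (proj1 (Hin b)); simpl; auto.
Qed.

Fixpoint tuples {A : Type} (alphabet : list A) (k : nat) : list (list A) :=
  match k with
  | O => [[]]
  | S k => flat_map (fun a => map (cons a) (tuples alphabet k)) alphabet
  end.

Lemma in_tuples {A : Type} (alphabet c : list A) :
  (forall a, In a c -> In a alphabet) -> In c (tuples alphabet (length c)).
Proof.
  induction c as [|a c IH]; intros Hc; simpl; [left; reflexivity|].
  apply in_flat_map; exists a; split; [apply Hc; left; reflexivity|].
  apply in_map, IH; intros b Hb; apply Hc; right; exact Hb.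
Qed.

Lemma listing_of_code {A B : Type} (code : A -> B -> Prop) (lB : list B) :
  (forall x, exists b, In b lB /\ code x b) ->
  (forall x y b, code x b -> code y b -> x = y) ->
  exists lA : list A, forall x, In x lA.
Proof.
  intros Hcover Hinj. destruct (classic (inhabited A)) as [inh|Hempty].
  - exists (map (fun b => epsilon inh (fun a => code a b)) lB).
    intros x. destruct (Hcover x) as [b [Hb Hxb]].
    apply in_map_iff; exists b; split; [|exact Hb].
    apply (Hinj _ x b); [|exact Hxb].
    apply (epsilon_spec inh (fun a => code a b)); exists x; exact Hxb.
  - exists []; intros x; exfalso; exact (Hempty (inhabits x)).
Qed.

Lemma NoDup_listing {A : Type} (l : list A) :
  (forall x, In x l) -> exists l' : list A, NoDup l' /\ forall x, In x l'.
Proof.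
  intros Hl. exists (nodup (fun a b => excluded_middle_informative (a = b)) l).
  split; [apply NoDup_nodup|intros x; apply nodup_In, Hl].
Qed.

Lemma well_founded_of_listing {A : Type} (R : A -> A -> Prop) (l : list A) :
  (forall x, In x l) -> (forall x y z, R x y -> R y z -> R x z) -> (forall x, ~ R x x) ->
  well_founded R.
Proof.
  intros Hl Htrans Hirr.
  apply (well_founded_lt_compat A (fun x => length (filter (fun y => classicb (R y x)) l))).
  intros x y Hxy. apply (length_filter_lt _ _ _ x).
  - intros a; rewrite !classicbP; eauto.
  - apply Hl.
  - apply classicbF, Hirr.
  - apply classicbP, Hxy.
Qed.

Definition atom (v : nat -> R) (k : nat) : R :=
  match k with O => 0 | S i => v i end.

(* Literal [2k] is the atom [k] (the constant 0 for [k = 0], the variable [v (k-1)]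
   otherwise) and literal [2k+1] is its negation. *)
Definition lit (v : nat -> R) (t : nat) : R :=
  if Nat.even t then atom v (Nat.div2 t) else 1 - atom v (Nat.div2 t).

Definition lit_neg (t : nat) : nat := if Nat.even t then S t else pred t.

Definition nlits (n : nat) : nat := 2 * S n.

Lemma lit_zero v : lit v 0 = 0.
Proof. reflexivity. Qed.

Lemma lit_one v : lit v 1 = 1.
Proof. unfold lit; simpl; ring. Qed.

Lemma lit_var v i : lit v (2 * S i) = v i.
Proof. unfold lit; rewrite Nat.even_even, Nat.div2_double; reflexivity. Qed.

Lemma lit_neg_spec n v t : (t < nlits n)%nat ->
  (lit_neg t < nlits n)%nat /\ lit v (lit_neg t) = 1 - lit v t.
Proof.
  intros Ht.
  assert (Eodd : forall k, Nat.even (S (2 * k)) = false /\ Nat.div2 (S (2 * k)) = k).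
  { intros k; rewrite <- Nat.add_1_r, Nat.even_odd, Nat.add_1_r, Nat.div2_succ_double; auto. }
  unfold nlits, lit_neg, lit in *.
  destruct (Nat.Even_or_Odd t) as [[k ->]|[k ->]]; rewrite ?Nat.add_1_r in *.
  - destruct (Eodd k) as [E1 E2]; rewrite Nat.even_even, Nat.div2_double, E1, E2.
    split; [lia|reflexivity].
  - destruct (Eodd k) as [E1 E2]; rewrite E1, E2, Nat.pred_succ.
    rewrite Nat.even_even, Nat.div2_double; split; [lia|ring].
Qed.

Definition leb_R (a b : R) : bool := if Rle_dec a b then true else false.

Definition order_type (n : nat) (v : nat -> R) : list bool :=
  map (fun k => leb_R (lit v (k / nlits n)) (lit v (k mod nlits n)))
    (seq 0 (nlits n * nlits n)).

Definition look (n : nat) (tbl : list bool) (s t : nat) : bool :=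
  nth (s * nlits n + t) tbl false.

Lemma look_order_type n v s t : (s < nlits n)%nat -> (t < nlits n)%nat ->
  look n (order_type n v) s t = leb_R (lit v s) (lit v t).
Proof.
  intros Hs Ht. unfold look, order_type.
  set (f := fun k => leb_R (lit v (k / nlits n)) (lit v (k mod nlits n))).
  rewrite nth_indep with (d' := f 0%nat) by (rewrite length_map, length_seq; nia).
  rewrite map_nth, seq_nth, Nat.add_0_l by nia. unfold f.
  rewrite <- (Nat.div_unique (s * nlits n + t) (nlits n) s t) by lia.
  rewrite <- (Nat.mod_unique (s * nlits n + t) (nlits n) s t) by lia.
  reflexivity.
Qed.

Lemma length_order_type n v : length (order_type n v) = (nlits n * nlits n)%nat.
Proof. unfold order_type; rewrite length_map, length_seq; reflexivity. Qed.

Definition lit_closed (n : nat) (op : R -> R -> R) : Prop :=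
  exists c : list bool -> nat -> nat -> nat,
    (forall tbl s t, (s < nlits n)%nat -> (t < nlits n)%nat -> (c tbl s t < nlits n)%nat) /\
    (forall v s t, (s < nlits n)%nat -> (t < nlits n)%nat ->
       lit v (c (order_type n v) s t) = op (lit v s) (lit v t)).

Lemma lit_closed_and n : lit_closed n nm_and.
Proof.
  exists (fun tbl s t => if look n tbl s t then s else t); split.
  - intros tbl s t Hs Ht; destruct look; assumption.
  - intros v s t Hs Ht; rewrite look_order_type by assumption.
    unfold nm_and, Rmin, leb_R; cases_R.
Qed.

Lemma lit_closed_or n : lit_closed n nm_or.
Proof.
  exists (fun tbl s t => if look n tbl s t then t else s); split.
  - intros tbl s t Hs Ht; destruct look; assumption.
  - intros v s t Hs Ht; rewrite look_order_type by assumption.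
    unfold nm_or, Rmax, leb_R; cases_R.
Qed.

Lemma lit_closed_prod n : lit_closed n nm_prod.
Proof.
  exists (fun tbl s t => if look n tbl t (lit_neg s) then 0%nat
                         else if look n tbl s t then s else t); split.
  - intros tbl s t Hs Ht; unfold nlits; destruct look; [lia|destruct look; assumption].
  - intros v s t Hs Ht. destruct (lit_neg_spec n v s Hs) as [Hneg Eneg].
    rewrite !look_order_type by assumption.
    unfold leb_R; rewrite Eneg; cases_R; rewrite ?lit_zero; unfold nm_prod, Rmin; cases_R.
Qed.

Lemma lit_closed_imp n : lit_closed n nm_imp.
Proof.
  exists (fun tbl s t => if look n tbl s t then 1%nat
                         else if look n tbl (lit_neg s) t then t else lit_neg s); split.
  - intros tbl s t Hs Ht; unfold nlits in *; destruct look; [lia|].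
    destruct look; [assumption|apply (lit_neg_spec n (fun _ => 0) s Hs)].
  - intros v s t Hs Ht. destruct (lit_neg_spec n v s Hs) as [Hneg Eneg].
    rewrite !look_order_type by assumption.
    unfold leb_R; rewrite Eneg; cases_R; rewrite ?lit_one, ?Eneg; unfold nm_imp, Rmax; cases_R.
Qed.

Definition lit_valued (n : nat) (f : (nat -> R) -> R) : Prop :=
  exists F : list bool -> nat,
    (forall tbl, (F tbl < nlits n)%nat) /\ forall v, f v = lit v (F (order_type n v)).

Lemma lit_valued_op n op f g : lit_closed n op -> lit_valued n f -> lit_valued n g ->
  lit_valued n (fun v => op (f v) (g v)).
Proof.
  intros [c [Hcb Hcv]] [F [HF EF]] [G [HG EG]].
  exists (fun tbl => c tbl (F tbl) (G tbl)); split; [auto|].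
  intros v; rewrite EF, EG, Hcv; auto.
Qed.

Lemma eval_lit_valued n phi : vars_lt n phi -> lit_valued n (fun v => eval v phi).
Proof.
  induction phi as [i| | |a IHa b IHb|a IHa b IHb|a IHa b IHb|a IHa b IHb]; simpl.
  - intros Hi; exists (fun _ => (2 * S i)%nat); split.
    + intros _; unfold nlits; lia.
    + intros v; symmetry; apply lit_var.
  - intros _; exists (fun _ => 0%nat); split; [intros; unfold nlits; lia|reflexivity].
  - intros _; exists (fun _ => 1%nat); split; [intros; unfold nlits; lia|].
    intros v; rewrite lit_one; reflexivity.
  - intros [Ha Hb]; apply lit_valued_op; auto using lit_closed_and.
  - intros [Ha Hb]; apply lit_valued_op; auto using lit_closed_or.
  - intros [Ha Hb]; apply lit_valued_op; auto using lit_closed_prod.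
  - intros [Ha Hb]; apply lit_valued_op; auto using lit_closed_imp.
Qed.

Lemma NM_ext n (x y : NM n) : nmf x = nmf y -> x = y.
Proof.
  destruct x as [fx hx], y as [fy hy]; simpl; intros ->; f_equal; apply proof_irrelevance.
Qed.

Lemma NM_listing n : exists l : list (NM n), forall x, In x l.
Proof.
  set (tables := tuples [true; false] (nlits n * nlits n)).
  apply (listing_of_code
    (fun (x : NM n) c => exists F : list bool -> nat, c = map F tables /\
       forall p, nmf x p = lit (proj1_sig p) (F (order_type n (proj1_sig p))))
    (tuples (seq 0 (nlits n)) (length tables))).
  - intros x. destruct (nm_in n x) as [phi [Hphi ->]].
    destruct (eval_lit_valued n phi Hphi) as [F [HF EF]].
    exists (map F tables); split; [|exists F; split; [reflexivity|intros p; apply EF]].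
    rewrite <- (length_map F tables). apply in_tuples.
    intros a Ha; apply in_map_iff in Ha as [tbl [<- _]]. apply in_seq; specialize (HF tbl); lia.
  - intros x y c [F [-> Ex]] [G [EFG Ey]]. apply NM_ext; extensionality p.
    rewrite Ex, Ey; f_equal. apply (ext_in_map EFG).
    unfold tables; rewrite <- (length_order_type n (proj1_sig p)). apply in_tuples; intros [|] _; simpl; auto.
Qed.

Lemma eval_unit_interval n (v : nat -> R) phi :
  (forall i, (i < n)%nat -> 0 <= v i <= 1) -> vars_lt n phi -> 0 <= eval v phi <= 1.
Proof.
  intros Hv; induction phi; simpl; try lra; [apply Hv|..];
    intros [Ha Hb]; specialize (IHphi1 Ha); specialize (IHphi2 Hb);
    unfold nm_and, nm_or, nm_prod, nm_imp, Rmin, Rmax; cases_R.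
Qed.

Lemma nmf_unit_interval n (x : NM n) p : 0 <= nmf x p <= 1.
Proof.
  destruct (nm_in n x) as [phi [Hphi ->]]. destruct p as [v Hp]; simpl.
  apply (eval_unit_interval n); [intros i Hi; apply (Hp i); exact Hi|exact Hphi].
Qed.

Lemma in_NM_imp (n : nat) (f g : pt n -> R) :
  in_NM n f -> in_NM n g -> in_NM n (fun p => nm_imp (f p) (g p)).
Proof.
  intros [a [Ha ->]] [b [Hb ->]]; exists (FImp a b); split; [split; assumption|reflexivity].
Qed.

Definition NM_imp {n : nat} (x y : NM n) : NM n :=
  mkNM (fun p => nm_imp (nmf x p) (nmf y p)) (in_NM_imp n _ _ (nm_in n x) (nm_in n y)).

Lemma NM_leP n (x y : NM n) : NM_le x y <-> forall p, nmf x p <= nmf y p.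
Proof.
  split.
  - intros H p. pose proof (f_equal (fun z => nmf z p) H) as E; simpl in E.
    unfold nm_and, Rmin in E; cases_R.
  - intros H. apply NM_ext; extensionality p; simpl. specialize (H p).
    unfold nm_and, Rmin; cases_R.
Qed.

Lemma NM_le_refl n (x : NM n) : NM_le x x.
Proof. apply NM_leP; intros; lra. Qed.

Lemma NM_le_trans n (x y z : NM n) : NM_le x y -> NM_le y z -> NM_le x z.
Proof. rewrite !NM_leP; intros H1 H2 p; specialize (H1 p); specialize (H2 p); lra. Qed.

Lemma NM_le_antisym n (x y : NM n) : NM_le x y -> NM_le y x -> x = y.
Proof.
  rewrite !NM_leP; intros H1 H2; apply NM_ext; extensionality p; apply Rle_antisym; auto.
Qed.

Lemma NM_le_bot n (x : NM n) : NM_le x (NM_bot n) -> x = NM_bot n.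
Proof.
  intros H; apply NM_le_antisym; [exact H|].
  apply NM_leP; intros p; apply nmf_unit_interval.
Qed.

Lemma NM_le_join_l n (x y : NM n) : NM_le x (NM_join x y).
Proof. apply NM_leP; intros p; simpl; unfold nm_or, Rmax; cases_R. Qed.

Lemma NM_le_join_r n (x y : NM n) : NM_le y (NM_join x y).
Proof. apply NM_leP; intros p; simpl; unfold nm_or, Rmax; cases_R. Qed.

Lemma NM_le_meet n (g x y : NM n) : NM_le g (NM_meet x y) <-> NM_le g x /\ NM_le g y.
Proof.
  rewrite !NM_leP; split.
  - intros H; split; intros p; specialize (H p); simpl in H; unfold nm_and, Rmin in H; cases_R.
  - intros [H1 H2] p; specialize (H1 p); specialize (H2 p); simpl; unfold nm_and, Rmin; cases_R.
Qed.

Definition NM_lt {n : nat} (x y : NM n) : Prop := NM_le x y /\ x <> y.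

Lemma NM_lt_wf n : well_founded (@NM_lt n).
Proof.
  destruct (NM_listing n) as [l Hl]. apply (well_founded_of_listing _ l Hl).
  - intros x y z [Hxy Nxy] [Hyz Nyz]; split; [eapply NM_le_trans; eauto|].
    intros <-; apply Nyz, NM_le_antisym; assumption.
  - intros x [_ N]; apply N; reflexivity.
Qed.

Lemma join_irreducible_le_join n (g x y : NM n) :
  join_irreducible g -> NM_le g (NM_join x y) -> NM_le g x \/ NM_le g y.
Proof.
  intros [_ Hg] Hle. rewrite NM_leP in Hle.
  assert (E : g = NM_join (NM_meet g x) (NM_meet g y)).
  { apply NM_ext; extensionality p; simpl. specialize (Hle p); simpl in Hle.
    unfold nm_or, nm_and, Rmax, Rmin in *; cases_R. }
  destruct (Hg _ _ E) as [E1|E1]; [left|right]; unfold NM_le; symmetry; exact E1.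
Qed.

(* A non-idempotent [g] is the join of [g ⊙ g] and [g ∧ ¬g]; the latter is pointwise
   at most 1/2, and an idempotent below 1/2 vanishes. *)
Lemma idempotent_below_not_idempotent n (g h : NM n) :
  join_irreducible g -> ~ idempotent g -> idempotent h -> NM_le h g -> h = NM_bot n.
Proof.
  intros [_ Hg] Hng Hh Hle. rewrite NM_leP in Hle.
  assert (E : g = NM_join (NM_prod g g) (NM_meet g (NM_imp g (NM_bot n)))).
  { apply NM_ext; extensionality p; simpl. pose proof (nmf_unit_interval n g p).
    unfold nm_or, nm_and, nm_prod, nm_imp, Rmax, Rmin; cases_R. }
  destruct (Hg _ _ E) as [E1|E1]; [contradiction Hng; symmetry; exact E1|].
  apply NM_ext; extensionality p; simpl.
  pose proof (f_equal (fun z => nmf z p) E1) as E2; simpl in E2.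
  pose proof (f_equal (fun z => nmf z p) Hh) as E3; simpl in E3.
  specialize (Hle p). pose proof (nmf_unit_interval n h p).
  unfold nm_and, nm_prod, nm_imp, Rmax, Rmin in *; cases_R.
Qed.

(* [g] is the join of [g ∧ (h1 → h2)] and [g ∧ (h2 → h1)] by prelinearity. *)
Lemma idempotents_below_join_irreducible_chain n (g h1 h2 : NM n) :
  join_irreducible g -> idempotent h1 -> idempotent h2 -> NM_le h1 g -> NM_le h2 g ->
  NM_le h1 h2 \/ NM_le h2 h1.
Proof.
  intros [_ Hg] I1 I2 L1 L2.
  assert (E : g = NM_join (NM_meet g (NM_imp h1 h2)) (NM_meet g (NM_imp h2 h1))).
  { apply NM_ext; extensionality p; simpl. pose proof (nmf_unit_interval n g p).
    unfold nm_or, nm_and, nm_imp, Rmax, Rmin; cases_R. }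
  rewrite NM_leP in L1, L2.
  destruct (Hg _ _ E) as [E1|E1]; [left|right]; apply NM_leP; intros p;
    pose proof (f_equal (fun z => nmf z p) E1) as E2; simpl in E2;
    pose proof (f_equal (fun z => nmf z p) I1) as E3; simpl in E3;
    pose proof (f_equal (fun z => nmf z p) I2) as E4; simpl in E4;
    specialize (L1 p); specialize (L2 p);
    pose proof (nmf_unit_interval n h1 p); pose proof (nmf_unit_interval n h2 p);
    unfold nm_and, nm_prod, nm_imp, Rmax, Rmin in *; cases_R.
Qed.

Lemma exists_min_idem_ji_below n (x y : NM n) :
  idem_ji y -> NM_le y x -> exists h, min_idem_ji h /\ NM_le h x.
Proof.
  induction y as [y IH] using (well_founded_ind (NM_lt_wf n)). intros Hy Hyx.
  destruct (classic (min_idem_ji y)) as [Hm|Hm]; [exists y; auto|].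
  assert (exists h, idem_ji h /\ NM_le h y /\ h <> y) as [h (Hh & Hhy & Nhy)].
  { apply NNPP; intros Hno; apply Hm; split; [exact Hy|].
    intros h Hh Hhy; apply NNPP; intros Nhy; apply Hno; exists h; auto. }
  apply (IH h); [split; auto|exact Hh|eapply NM_le_trans; eauto].
Qed.

Lemma not_join_irreducible n (x : NM n) :
  x <> NM_bot n -> ~ join_irreducible x ->
  exists y z, x = NM_join y z /\ NM_lt y x /\ NM_lt z x /\ NM_lt (NM_meet y z) x.
Proof.
  intros Hx Hnj.
  assert (exists y z, x = NM_join y z /\ x <> y /\ x <> z) as [y [z (Exyz & Ny & Nz)]].
  { apply NNPP; intros Hno; apply Hnj; split; [exact Hx|].
    intros y z Exyz; apply NNPP; intros N; apply Hno; exists y, z; tauto. }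
  assert (Ly : NM_le y x) by (rewrite Exyz; apply NM_le_join_l).
  assert (Lz : NM_le z x) by (rewrite Exyz; apply NM_le_join_r).
  assert (Lm : NM_le (NM_meet y z) y) by apply (NM_le_meet n _ y z), NM_le_refl.
  exists y, z; split; [exact Exyz|split; [|split]].
  - split; [exact Ly|auto].
  - split; [exact Lz|auto].
  - split; [eapply NM_le_trans; eauto|].
    intros E; apply Ny, NM_le_antisym; [|exact Ly]. rewrite <- E at 1; exact Lm.
Qed.

Lemma valuation_unique n (nu mu : NM n -> R) :
  valuation nu -> valuation mu -> nu (NM_bot n) = mu (NM_bot n) ->
  (forall g, join_irreducible g -> nu g = mu g) -> forall x, nu x = mu x.
Proof.
  intros Hnu Hmu Hbot Hji x.
  induction x as [x IH] using (well_founded_ind (NM_lt_wf n)).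
  destruct (classic (x = NM_bot n)) as [->|Hx]; [exact Hbot|].
  destruct (classic (join_irreducible x)) as [Hj|Hnj]; [auto|].
  destruct (not_join_irreducible n x Hx Hnj) as [y [z (-> & Ly & Lz & Lm)]].
  pose proof (Hnu y z) as Vnu; pose proof (Hmu y z) as Vmu.
  rewrite (IH y Ly), (IH z Lz), (IH _ Lm) in Vnu. lra.
Qed.

Section CountBelow.

Variables (n : nat) (U : list (NM n)).

Definition min_idem_ji_below (x : NM n) : list (NM n) :=
  filter (fun g => classicb (min_idem_ji g /\ NM_le g x)) U.

Lemma count_below_valuation : valuation (fun x => INR (length (min_idem_ji_below x))).
Proof.
  intros x y. unfold min_idem_ji_below.
  set (below := fun z g : NM n => classicb (min_idem_ji g /\ NM_le g z)).
  rewrite (filter_ext (below (NM_join x y)) (fun g => below x g || below y g)).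
  2:{ intros g; apply eq_iff_eq_true; rewrite orb_true_iff; unfold below; rewrite !classicbP.
      split; [intros [Hg Hle]|intros [[Hg Hle]|[Hg Hle]]].
      - destruct (join_irreducible_le_join n g x y (proj2 (proj1 Hg)) Hle); tauto.
      - split; [exact Hg|eapply NM_le_trans; [exact Hle|apply NM_le_join_l]].
      - split; [exact Hg|eapply NM_le_trans; [exact Hle|apply NM_le_join_r]]. }
  rewrite (filter_ext (below (NM_meet x y)) (fun g => below x g && below y g)).
  2:{ intros g; apply eq_iff_eq_true; rewrite andb_true_iff; unfold below; rewrite !classicbP.
      rewrite NM_le_meet; tauto. }
  rewrite <- !plus_INR, length_filter_orb_andb; reflexivity.
Qed.

Lemma count_below_bot : length (min_idem_ji_below (NM_bot n)) = 0%nat.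
Proof.
  apply length_zero_iff_nil, incl_l_nil. intros g Hg.
  apply filter_In in Hg as [_ Hg]; apply classicbP in Hg as [[[_ [Hgb _]] _] Hle].
  contradiction (Hgb (NM_le_bot n g Hle)).
Qed.

Lemma count_below_not_idempotent g :
  join_irreducible g -> ~ idempotent g -> length (min_idem_ji_below g) = 0%nat.
Proof.
  intros Hg Hng. apply length_zero_iff_nil, incl_l_nil. intros h Hh.
  apply filter_In in Hh as [_ Hh]; apply classicbP in Hh as [[[Ih [Hhb _]] _] Hle].
  contradiction (Hhb (idempotent_below_not_idempotent n g h Hg Hng Ih Hle)).
Qed.

Hypotheses (HU : NoDup U) (HUin : forall x, In x U).

Lemma count_below_idempotent g :
  join_irreducible g -> idempotent g -> length (min_idem_ji_below g) = 1%nat.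
Proof.
  intros Hg Ig.
  destruct (exists_min_idem_ji_below n g g (conj Ig Hg) (NM_le_refl n g)) as [h [Hh Hhg]].
  apply (NoDup_length_singleton _ h); [apply NoDup_filter, HU|].
  intros k; unfold min_idem_ji_below; rewrite filter_In, classicbP; split.
  - intros [_ [Hk Hkg]].
    destruct (idempotents_below_join_irreducible_chain n g h k Hg
                (proj1 (proj1 Hh)) (proj1 (proj1 Hk)) Hhg Hkg) as [L|L].
    + symmetry; apply (proj2 Hk h (proj1 Hh) L).
    + apply (proj2 Hh k (proj1 Hk) L).
  - intros ->; split; [apply HUin|split; assumption].
Qed.

End CountBelow.

Theorem lemma3 (n : nat) (Hn : (1 <= n)%nat) (chi : NM n -> R)
  (Hchi : is_chi_plus chi) (x : NM n) :
  exists l : list (NM n),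
    NoDup l /\
    (forall g : NM n, In g l <-> (min_idem_ji g /\ NM_le g x)) /\
    chi x = INR (length l).
Proof.
  destruct Hchi as [Hval [Hbot Hji]].
  destruct (NM_listing n) as [l0 Hl0]; destruct (NoDup_listing l0 Hl0) as [U [HU HUin]].
  exists (min_idem_ji_below n U x); split; [apply NoDup_filter, HU|split].
  - intros g; unfold min_idem_ji_below; rewrite filter_In, classicbP.
    split; [tauto|intros H; split; [apply HUin|exact H]].
  - revert x; apply valuation_unique; [exact Hval|apply count_below_valuation|..].
    + rewrite Hbot, count_below_bot; reflexivity.
    + intros g Hg; destruct (Hji g Hg) as [H1 H0].
      destruct (classic (idempotent g)) as [Ig|Ig].
      * rewrite (H1 Ig), count_below_idempotent; auto.
      * rewrite (H0 Ig), count_below_not_idempotent; auto.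
Qed.
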